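(* Let $p\in\mathbb{T}^{\mathcal{P}([n])}$ be a tropical Wick vector. Then the cocycle space $\mathcal{Q}(p)\subseteq\mathbb{T}^{\mathcal{J}}$ of $p$ is the set of admissible vectors in the tropical convex hull of the cocircuits of $p$.
   Context: $\mathbb{T}=\mathbb{R}\cup\{\infty\}$ with $\oplus=\min$, $\odot=+$; $\mathcal{P}([n])$ the set of subsets of $[n]$. A tropical Wick vector is $p$ such that for all $S,T\subseteq[n]$ the minimum $\min_{i\in S\Delta T}(p_{S\Delta\{i\}}+p_{T\Delta\{i\}})$ is attained at least twice or equals $\infty$. Let $\mathcal{J}=\{1,\dots,n,1^*,\dots,n^*\}$ with involution $i\leftrightarrow i^*$; $X\subseteq\mathcal{J}$ is admissible if $X\cap X^*=\emptyset$, and a vector in $\mathbb{T}^{\mathcal{J}}$ is admissible if its support (coordinates $\neq\infty$) is admissible. For $S\subseteq[n]$ let $\bar S=S\cup\{i^*:i\in[n]\setminus S\}$ and $\bar p_{\bar S}:=p_S$. For $T\subseteq[n]$: $(c_T)_i=\bar p_{\bar T\Delta\{i,i^*\}}$ if $i\in\bar T$, $\infty$ otherwise; $(c^*_T)_i=\bar p_{\bar T\Delta\{i,i^*\}}$ if $i\notin\bar T$, $\infty$ otherwise. Circuits of $p$: $c_T+\lambda\mathbf{1}$ ($\lambda\in\mathbb{R}$) with nonempty support; cocircuits: $c^*_T+\lambda\mathbf{1}$ with nonempty support. $x,y$ are tropically orthogonal if $\min_k(x_k+y_k)$ is attained at least twice or equals $\infty$. The cocycle space $\mathcal{Q}(p)$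 is the set of admissible vectors tropically orthogonal to all circuits of $p$. The tropical convex hull of a set $A$ is the set of finite tropical linear combinations $\lambda_1\odot a_1\oplus\cdots\oplus\lambda_r\odot a_r$, $a_k\in A$, $\lambda_k\in\mathbb{T}$. *)

(* Tropical semiring T = R ∪ {∞} modelled as option R,
   with None = ∞, over an arbitrary R : realType (the real numbers). *)
From HB Require Import structures.
From mathcomp Require Import all_boot all_order all_algebra.
From mathcomp Require Import reals.

Set Implicit Arguments. Unset Strict Implicit. Unset Printing Implicit Defensive.
Import Order.TTheory GRing.Theory Num.Theory.
Local Open Scope ring_scope.

Section Trop.
Variable R : realType.

Definition tle (a b : option R) : bool :=
  match a, b with
  | _, None => true
  | None, Some _ => false
  | Some x, Some y => (x <= y)%R
  end.

(* tropical multiplication ⊙ = + *)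
Definition tadd (a b : option R) : option R :=
  match a, b with Some x, Some y => Some (x + y) | _, _ => None end.

Definition tmin (a b : option R) : option R := if tle a b then a else b.

Definition min_twice (I : finType) (S : {set I}) (f : I -> option R) : Prop :=
  (forall k, k \in S -> f k = None) \/
  exists k l, [/\ k \in S, l \in S, k != l, f k = f l &
                  forall j, j \in S -> tle (f k) (f j)].

Definition symd (I : finType) (A B : {set I}) : {set I} := (A :\: B) :|: (B :\: A).

Definition wick (n : nat) (p : {set 'I_n} -> option R) : Prop :=
  forall S T : {set 'I_n},
    min_twice (symd S T) (fun i => tadd (p (symd S [set i])) (p (symd T [set i]))).

(* J = {1..n, 1*..n*}: (i, true) is i, (i, false) is i* *)
Definition star (n : nat) (x : 'I_n * bool) : 'I_n * bool := (x.1, ~~ x.2).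

Definition admissible_set (n : nat) (X : {set 'I_n * bool}) : Prop :=
  forall x, x \in X -> star x \notin X.

Definition supp (n : nat) (v : 'I_n * bool -> option R) : {set 'I_n * bool} :=
  [set x | v x != None].

Definition admissible (n : nat) (v : 'I_n * bool -> option R) : Prop :=
  admissible_set (supp v).

(* S̄ = S ∪ {i* : i ∉ S} *)
Definition bar (n : nat) (S : {set 'I_n}) : {set 'I_n * bool} :=
  [set x : 'I_n * bool | x.2 == (x.1 \in S)].

(* p̄_{S̄} := p_S (and ∞ on sets not of the form S̄, never used below) *)
Definition pbar (n : nat) (p : {set 'I_n} -> option R) (X : {set 'I_n * bool})
  : option R :=
  match [pick S0 | bar S0 == X] with Some S0 => p S0 | None => None end.

Definition circ (n : nat) (p : {set 'I_n} -> option R) (T : {set 'I_n})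
  (j : 'I_n * bool) : option R :=
  if j \in bar T then pbar p (symd (bar T) [set j; star j]) else None.

Definition cocirc (n : nat) (p : {set 'I_n} -> option R) (T : {set 'I_n})
  (j : 'I_n * bool) : option R :=
  if j \notin bar T then pbar p (symd (bar T) [set j; star j]) else None.

Definition shift (n : nat) (v : 'I_n * bool -> option R) (lam : R)
  (j : 'I_n * bool) : option R := tadd (v j) (Some lam).

Definition is_circuit (n : nat) (p : {set 'I_n} -> option R)
  (v : 'I_n * bool -> option R) : Prop :=
  exists (T : {set 'I_n}) (lam : R),
    (forall j, v j = shift (circ p T) lam j) /\ supp v != set0.

Definition is_cocircuit (n : nat) (p : {set 'I_n} -> option R)
  (v : 'I_n * bool -> option R) : Prop :=
  exists (T : {set 'I_n}) (lam : R),
    (forall j, v j = shift (cocirc p T) lam j) /\ supp v != set0.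

Definition torth (n : nat) (x y : 'I_n * bool -> option R) : Prop :=
  min_twice [set: 'I_n * bool] (fun k => tadd (x k) (y k)).

Definition cocycle (n : nat) (p : {set 'I_n} -> option R)
  (x : 'I_n * bool -> option R) : Prop :=
  admissible x /\ forall v, is_circuit p v -> torth x v.

Definition tconv (n : nat) (A : ('I_n * bool -> option R) -> Prop)
  (x : 'I_n * bool -> option R) : Prop :=
  exists (r : nat) (a : 'I_r -> 'I_n * bool -> option R) (lam : 'I_r -> option R),
    (forall k, A (a k)) /\
    forall j, x j = \big[tmin/None]_(k < r) tadd (lam k) (a k j).

End Trop.

From HB Require Import structures.
From mathcomp Require Import all_boot all_order all_algebra reals lra.
Set Implicit Arguments. Unset Strict Implicit. Unset Printing Implicit Defensive.
Import Order.TTheory GRing.Theory Num.Theory.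
Local Open Scope ring_scope.

(* Cocircuits are tropically orthogonal to circuits by the Wick relations, and
   orthogonality to a fixed vector passes to tropical linear combinations; so
   admissible points of the hull of the cocircuits are cocycles.  Conversely,
   let x be a cocycle with support A and j in A.  Among the S with p_S finite,
   choose one minimising first |bar S :&: A| and then
   p_S - sum_{k in bar S :&: A} x_k; orthogonality of x to a circuit allows one
   to assume moreover j in bar S.  Minimality then says exactly that the
   cocircuit of S (+) {j}, shifted to agree with x at j, dominates x
   coordinatewise, and the tropical sum of these cocircuits over j in A is x. *)

Section TropicalOrder.
Variable R : realType.
Implicit Types a b c : option R.

Lemma tle_refl a : tle a a.
Proof. by case: a => //= x. Qed.

Lemma tle_trans b a c : tle a b -> tle b c -> tle a c.
Proof. by case: a; case: b; case: c => //= x y z; apply: le_trans. Qed.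

Lemma tle_total a b : tle a b || tle b a.
Proof. by case: a; case: b => //= x y; apply: le_total. Qed.

Lemma tle_anti a b : tle a b -> tle b a -> a = b.
Proof. by case: a; case: b => //= x y h1 h2; congr Some; apply/eqP; rewrite eq_le h1 h2. Qed.

Lemma tle_None a : tle a None.
Proof. by case: a. Qed.

Lemma None_tle a : tle None a -> a = None.
Proof. by case: a. Qed.

Lemma tle_neq_None a b : tle a b -> b != None -> a != None.
Proof. by case: a; case: b. Qed.

Lemma tle_tadd2r c a b : tle a b -> tle (tadd a c) (tadd b c).
Proof. by case: a; case: b; case: c => //= x y z; rewrite lerD2r. Qed.

Lemma taddC a b : tadd a b = tadd b a.
Proof. by case: a; case: b => //= x y; rewrite addrC. Qed.

Lemma taddA a b c : tadd a (tadd b c) = tadd (tadd a b) c.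
Proof. by case: a; case: b; case: c => //= x y z; rewrite addrA. Qed.

Lemma big_tmin_le (I : eqType) (s : seq I) (F : I -> option R) i :
  i \in s -> tle (\big[@tmin R/None]_(j <- s) F j) (F i).
Proof.
elim: s => [|j s IH] //; rewrite big_cons inE.
set b := \big[_/_]_(k <- s) F k; rewrite /tmin.
case/orP=> [/eqP <-|/IH bFi]; case: ifP => // h.
- exact: tle_refl.
- by have := tle_total (F i) b; rewrite h.
- exact: tle_trans h bFi.
Qed.

Lemma big_tmin_ge (I : Type) (s : seq I) (F : I -> option R) a :
  (forall i, tle a (F i)) -> tle a (\big[@tmin R/None]_(i <- s) F i).
Proof.
move=> aF; apply: (big_rec (tle a)); first exact: tle_None.
by move=> i b _ ab; rewrite /tmin; case: ifP.
Qed.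

Lemma big_tmin_attained (I : Type) (s : seq I) (F : I -> option R) :
  \big[@tmin R/None]_(i <- s) F i = None \/
  exists i, \big[@tmin R/None]_(i <- s) F i = F i.
Proof.
apply: (big_rec (fun b => b = None \/ exists i, b = F i)); first by left.
by move=> i b _ Hb; rewrite /tmin; case: ifP => _ //; right; exists i.
Qed.

Lemma tmin_argmin (I : finType) (f : I -> option R) (i0 : I) :
  exists i, forall j, tle (f i) (f j).
Proof.
have minF j := big_tmin_le f (mem_index_enum j).
case: (big_tmin_attained (index_enum I) f) => [E|[i E]]; last first.
  by exists i => j; rewrite -E.
by exists i0 => j; have := minF j; rewrite E => /None_tle ->; apply: tle_None.
Qed.

Lemma min_twice_other (I : finType) (S : {set I}) (f : I -> option R) j :
  min_twice S f -> j \in S -> f j != None ->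
  exists m, [/\ m \in S, m != j & tle (f m) (f j)].
Proof.
move=> [allN|[k [l [kS lS kl fkl minf]]]] jS fj; first by rewrite allN in fj.
have [kj|kj] := eqVneq k j; last by exists k; rewrite kS kj minf.
by exists l; rewrite lS -fkl minf // -kj eq_sym.
Qed.

End TropicalOrder.

Section Orthogonality.
Variables (R : realType) (n : nat).
Implicit Types x y c v : 'I_n * bool -> option R.

Lemma eq_torth x x' v v' : x =1 x' -> v =1 v' -> torth x' v' -> torth x v.
Proof.
move=> Ex Ev [allN|[k [l [kS lS kl fkl minf]]]]; [left|right].
  by move=> k kS; rewrite Ex Ev; apply: allN.
exists k, l; split => //; first by rewrite !Ex !Ev.
by move=> j jS; rewrite !Ex !Ev; apply: minf.
Qed.

(* The minimum of x + c is attained at some j0, and x j0 = lam k + a j0 for a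
   generator a of the combination; the two minimisers of a + c then also
   minimise x + c. *)
Lemma torth_tconv (A : ('I_n * bool -> option R) -> Prop) c x :
  (forall y, A y -> torth y c) -> tconv A x -> torth x c.
Proof.
move=> orthA [r [a [lam [Aa Ex]]]].
pose f k := tadd (x k) (c k).
have [allN|] := boolP [forall j, f j == None].
  by left => k _; apply/eqP; move/forallP: allN; apply.
rewrite negb_forall => /existsP [j1 fj1].
have [j0 minf] := tmin_argmin f j1.
have fj0 : f j0 != None by apply: tle_neq_None (minf j1) fj1.
have [xj0|[k xj0]] := big_tmin_attained (index_enum 'I_r) (fun k => tadd (lam k) (a k j0)).
  by move: fj0; rewrite /f Ex xj0.
have f_le j : tle (f j) (tadd (lam k) (tadd (a k j) (c j))).
  rewrite taddA; apply: tle_tadd2r; rewrite Ex.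
  exact: big_tmin_le (mem_index_enum k).
have fj0E : f j0 = tadd (lam k) (tadd (a k j0) (c j0)) by rewrite taddA /f Ex xj0.
case: (orthA _ (Aa k)) => [allN|[k1 [k2 [_ _ k12 e minak]]]].
  by move: fj0; rewrite fj0E allN ?in_setT // taddC.
have f_min m : tadd (a k m) (c m) = tadd (a k k1) (c k1) -> f m = f j0.
  move=> em; apply: tle_anti (minf m); apply: tle_trans (f_le m) _.
  by rewrite fj0E em !(taddC (lam k)); apply/tle_tadd2r/minak/in_setT.
right; exists k1, k2; split; rewrite ?in_setT //.
  by have := f_min k1 erefl; have := f_min k2 (esym e); rewrite /f => -> ->.
by move=> j _; have := f_min k1 erefl; rewrite /f => ->; apply: minf.
Qed.

End Orthogonality.

Section Bar.
Variable n : nat.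
Implicit Types (S T : {set 'I_n}) (j k a b : 'I_n * bool).

Lemma in_symd (I : finType) (A B : {set I}) i :
  (i \in symd A B) = (i \in A) (+) (i \in B).
Proof. by rewrite !inE; case: (i \in A); case: (i \in B). Qed.

Lemma in_bar S k : (k \in bar S) = (k.2 == (k.1 \in S)).
Proof. by rewrite inE. Qed.

Lemma in_bar_symd1 S u k :
  (k \in bar (symd S [set u])) = (k \in bar S) (+) (k.1 == u).
Proof. by rewrite !in_bar in_symd inE; case: k => k1 [] /=; case: (k1 \in S); case: (k1 == u). Qed.

Lemma in_bar_star S k : (star k \in bar S) = (k \notin bar S).
Proof. by rewrite !in_bar; case: k => k1 [] /=; case: (k1 \in S). Qed.

Lemma star_neq k : star k != k.
Proof. by case: k => k1 []; rewrite /star xpair_eqE eqxx. Qed.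

Lemma fst_eq_star k a : k.1 = a.1 -> k = a \/ k = star a.
Proof. by case: k a => k1 k2 [a1 a2] /= ->; rewrite /star; case: k2; case: a2; auto. Qed.

Lemma bar_fst_inj S k a : k.1 = a.1 -> (k \in bar S) = (a \in bar S) -> k = a.
Proof. by move=> /fst_eq_star [//|->]; rewrite in_bar_star; case: (a \in bar S). Qed.

Lemma bar_inj : injective (@bar n).
Proof.
move=> S1 S2 eqS; apply/setP => i.
have : ((i, true) \in bar S1) = ((i, true) \in bar S2) by rewrite eqS.
by rewrite !in_bar.
Qed.

Lemma bar_symd S j : symd (bar S) [set j; star j] = bar (symd S [set j.1]).
Proof.
apply/setP => k; rewrite in_bar_symd1 in_symd !inE.
case: k j => [k1 k2] [j1 j2] /=; rewrite !xpair_eqE.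
by case: (k1 == j1); last rewrite !andFb; case: k2; case: j2.
Qed.

Lemma symd1K S u : symd (symd S [set u]) [set u] = S.
Proof. by apply/setP => i; rewrite !in_symd -addbA addbb addbF. Qed.

Lemma pbar_bar (R : realType) (p : {set 'I_n} -> option R) S : pbar p (bar S) = p S.
Proof.
rewrite /pbar; case: pickP => [S0 /eqP /bar_inj -> //|].
by move=> /(_ S); rewrite eqxx.
Qed.

Lemma circE (R : realType) (p : {set 'I_n} -> option R) T j :
  circ p T j = if j \in bar T then p (symd T [set j.1]) else None.
Proof. by rewrite /circ bar_symd pbar_bar. Qed.

Lemma cocircE (R : realType) (p : {set 'I_n} -> option R) T j :
  cocirc p T j = if j \notin bar T then p (symd T [set j.1]) else None.
Proof. by rewrite /cocirc bar_symd pbar_bar. Qed.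

(* For [a \in bar S], [b \notin bar S] with [a.1 != b.1], [bar (exch S a b)]
   is [bar S] with [a], [star b] replaced by [star a], [b]. *)
Definition exch S a b := symd (symd S [set a.1]) [set b.1].

Lemma in_bar_exch S a b k :
  (k \in bar (exch S a b)) = (k \in bar S) (+) (k.1 == a.1) (+) (k.1 == b.1).
Proof. by rewrite !in_bar_symd1. Qed.

Lemma exchC S a b : exch S a b = exch S b a.
Proof. by apply: bar_inj; apply/setP => k; rewrite !in_bar_exch addbAC. Qed.

End Bar.

(* On [J], the sum of a cocircuit of [U] and a circuit of [T] is finite only
   on the coordinates [(i, i \in T)] with [i \in symd T U], where it is the
   Wick term [p (symd T [set i]) + p (symd U [set i])] up to a constant. *)
Lemma torth_cocirc_circ (R : realType) n (p : {set 'I_n} -> option R) T U lam mu :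
  wick p -> torth (shift (cocirc p U) lam) (shift (circ p T) mu).
Proof.
move=> wickp; rewrite /torth.
pose g i := tadd (p (symd T [set i])) (p (symd U [set i])).
pose f k := tadd (shift (cocirc p U) lam k) (shift (circ p T) mu k).
change (min_twice [set: 'I_n * bool] f); rewrite /min_twice.
have fE k : f k = if (k.1 \in symd T U) && (k == (k.1, k.1 \in T))
                  then tadd (g k.1) (Some (lam + mu)) else None.
  have -> : (k.1 \in symd T U) && (k == (k.1, k.1 \in T))
            = (k \in bar T) && (k \notin bar U).
    rewrite !in_bar in_symd; case: k => k1 k2 /=; rewrite xpair_eqE eqxx /=.
    by case: k2; case: (k1 \in T); case: (k1 \in U).
  rewrite /f /g /shift cocircE circE.
  case: (p (symd T [set k.1])) => [a|]; case: (p (symd U [set k.1])) => [b|];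
  case: (k \in bar T); case: (k \in bar U) => //=.
  by rewrite addrACA (addrC b).
case: (wickp T U) => [allN|[i1 [i2 [i1S i2S i12 e ming]]]].
  by left => k _; rewrite fE; case: ifP => // /andP[kS _]; rewrite /g allN.
right; exists (i1, i1 \in T), (i2, i2 \in T); split; rewrite ?in_setT //.
- by rewrite xpair_eqE negb_and i12.
- by rewrite !fE /= i1S i2S !eqxx /=; congr tadd.
move=> j _; rewrite !fE /= i1S eqxx /=.
case: ifP => [/andP[jS _]|_]; last exact: tle_None.
exact/tle_tadd2r/ming.
Qed.

Lemma in_supp (R : realType) n (x : 'I_n * bool -> option R) k :
  (k \in supp x) = (x k != None).
Proof. by rewrite inE. Qed.

Section Exchange.
Variables (R : realType) (n : nat) (x : 'I_n * bool -> option R).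
Variables (S : {set 'I_n}) (a b : 'I_n * bool).
Hypotheses (admx : admissible x) (aS : a \in bar S) (aA : a \in supp x).
Hypotheses (bS : b \notin bar S) (ab : a.1 != b.1).

Let ab_neq : a != b. Proof. by apply: contraNneq ab => ->. Qed.

Lemma supp_bar_exch :
  b \in supp x -> bar (exch S a b) :&: supp x = b |: ((bar S :&: supp x) :\ a).
Proof.
move=> bA; apply/setP => k; rewrite in_setI in_setU1 in_setD1 in_setI in_bar_exch.
have [/fst_eq_star [->|->]|ka] := eqVneq k.1 a.1.
- by rewrite aS eqxx (negbTE ab) (negbTE ab_neq).
- rewrite (negbTE (admx aA)) andbF in_bar_star aS /= andbF orbF.
  by apply/esym/negbTE; apply: contraNneq ab => <-.
have [/fst_eq_star [->|->]|kb] := eqVneq k.1 b.1.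
- by rewrite (negbTE bS) eqxx bA.
- by rewrite (negbTE (admx bA)) (negbTE (star_neq b)) !andbF.
rewrite !addbF.
have -> : (k == b) = false by apply: contraNF kb => /eqP ->.
by have -> : (k != a) by apply: contraNneq ka => ->.
Qed.

Lemma supp_bar_exch_sub :
  b \notin supp x -> bar (exch S a b) :&: supp x \subset (bar S :&: supp x) :\ a.
Proof.
move=> bA; apply/subsetP => k; rewrite in_setI in_setD1 in_setI in_bar_exch.
case/andP=> kS' kA; rewrite kA andbT.
have [ka|ka] := eqVneq k.1 a.1.
  case: (fst_eq_star ka) => ek; first by move: kS'; rewrite ek aS eqxx (negbTE ab).
  by move: kA; rewrite ek (negbTE (admx aA)).
have [kb|kb] := eqVneq k.1 b.1.
  case: (fst_eq_star kb) => ek; first by move: kA; rewrite ek (negbTE bA).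
  by move: kS'; rewrite ek in_bar_star bS /= eqxx (eq_sym b.1) (negbTE ab).
move: kS'; rewrite (negbTE ka) (negbTE kb) !addbF => ->.
by rewrite andbT; apply: contraNneq ka => ->.
Qed.

End Exchange.

Section Optimal.
Variables (R : realType) (n : nat) (p : {set 'I_n} -> option R).
Variable x : 'I_n * bool -> option R.
Hypothesis admx : admissible x.

Definition overlap (S : {set 'I_n}) : nat := #|bar S :&: supp x|.

Definition excess (S : {set 'I_n}) : R :=
  odflt 0 (p S) - \sum_(k in bar S :&: supp x) odflt 0 (x k).

Definition optimal (S : {set 'I_n}) : Prop :=
  [/\ p S != None,
      forall S', p S' != None -> (overlap S <= overlap S')%N &
      forall S', p S' != None -> overlap S' = overlap S -> excess S <= excess S'].

Lemma exists_optimal : (exists S, p S != None) -> exists S, optimal S.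
Proof.
case=> S0 pS0; case: (@arg_minnP _ S0 (fun S => p S != None) overlap pS0) => S1 pS1 minS1.
have pS1' : (p S1 != None) && (overlap S1 == overlap S1) by rewrite pS1 eqxx.
case: (@arg_minP _ _ _ S1 (fun S => (p S != None) && (overlap S == overlap S1)) excess pS1')
  => S /andP[pS /eqP oS] minS.
exists S; split => // [S' pS'|S' pS' oS']; first by rewrite oS; apply: minS1.
by apply: minS; rewrite pS' oS' oS eqxx.
Qed.

Section OptimalExchange.
Variables (S : {set 'I_n}) (a b : 'I_n * bool).
Hypotheses (aS : a \in bar S) (aA : a \in supp x) (bS : b \notin bar S) (ab : a.1 != b.1).

Lemma overlap_exch : b \in supp x -> overlap (exch S a b) = overlap S.
Proof.
move=> bA; have aX : a \in bar S :&: supp x by rewrite in_setI aS aA.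
rewrite /overlap supp_bar_exch // cardsU1 [in RHS](cardsD1 a) aX.
by rewrite in_setD1 in_setI (negbTE bS) andbF.
Qed.

Lemma overlap_exch_lt : b \notin supp x -> (overlap (exch S a b) < overlap S)%N.
Proof.
move=> bA; have aX : a \in bar S :&: supp x by rewrite in_setI aS aA.
apply: (leq_ltn_trans (subset_leq_card (supp_bar_exch_sub admx aS aA bS ab bA))).
by rewrite /overlap [in X in (_ < X)%N](cardsD1 a) aX.
Qed.

Lemma excess_exch : b \in supp x ->
  excess (exch S a b) - excess S =
  (odflt 0 (p (exch S a b)) - odflt 0 (x b)) - (odflt 0 (p S) - odflt 0 (x a)).
Proof.
move=> bA; have aX : a \in bar S :&: supp x by rewrite in_setI aS aA.
have bX : b \notin (bar S :&: supp x) :\ a by rewrite in_setD1 in_setI (negbTE bS) andbF.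
rewrite /excess supp_bar_exch // big_setU1 //= [in X in _ - X = _](big_setD1 a aX) /=.
by set s := \sum_(_ in _) _; lra.
Qed.

Lemma optimal_exch : optimal S -> b \in supp x -> p (exch S a b) != None ->
  excess (exch S a b) <= excess S -> optimal (exch S a b).
Proof.
move=> [_ minO minE] bA pS' eS'; rewrite /optimal overlap_exch //.
split => // S'' pS'' oS''; apply: le_trans eS' (minE _ pS'' oS'').
Qed.

End OptimalExchange.

(* Orthogonality to the circuit of [symd S [set j.1]] yields an [m] in
   [bar S] whose exchange with [j] does not increase the excess. *)
Lemma optimal_mem_bar S j :
  (forall v, is_circuit p v -> torth x v) -> x j != None -> optimal S ->
  exists S', optimal S' /\ j \in bar S'.
Proof.
move=> orthx xj optS; have [jS|jS] := boolP (j \in bar S); first by exists S.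
have [pS _ _] := optS; case E: (p S) pS => [ps|] // _.
case Exj: (x j) xj => [xj|] // _.
pose T := symd S [set j.1].
have jT : j \in bar T by rewrite in_bar_symd1 (negbTE jS) eqxx.
pose v := shift (circ p T) 0.
have vj : v j = Some (ps + 0) by rewrite /v /shift circE jT symd1K E.
have circv : is_circuit p v by exists T, 0; split => //; apply/set0Pn; exists j; rewrite inE vj.
have fj : tadd (x j) (v j) != None by rewrite Exj vj.
have [m [_ mj]] := min_twice_other (orthx v circv) (in_setT j) fj.
rewrite Exj vj /v /shift circE; case Exm: (x m) => [xm|] //.
case mT: (m \in bar T) => //; case Epm: (p (symd T [set m.1])) => [pm|] //= le_m.
have mj1 : m.1 != j.1.
  by apply: contraNneq mj => mj1; apply/eqP/(@bar_fst_inj _ T); rewrite ?mT ?jT.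
have mS : m \in bar S by move: mT; rewrite in_bar_symd1 (negbTE mj1) addbF.
have mA : m \in supp x by rewrite in_supp Exm.
have jA : j \in supp x by rewrite in_supp Exj.
have ES' : p (exch S m j) = Some pm by rewrite exchC.
exists (exch S m j); split; last by rewrite in_bar_exch (negbTE jS) eqxx eq_sym (negbTE mj1).
apply: optimal_exch => //; first by rewrite ES'.
by rewrite -subr_le0 excess_exch // ES' E Exj Exm /=; lra.
Qed.

Lemma optimal_cocirc_ge S j xj ps :
  optimal S -> j \in bar S -> x j = Some xj -> p S = Some ps ->
  forall k, tle (x k) (shift (cocirc p (symd S [set j.1])) (xj - ps) k).
Proof.
move=> [_ minO minE] jS Exj EpS k; rewrite /shift cocircE.
case kT: (k \in bar _) => /=; first exact: tle_None.
case Ep': (p (exch S j k)) => [pk|] /=; last exact: tle_None.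
have jA : j \in supp x by rewrite in_supp Exj.
have [kj|kj] := eqVneq k.1 j.1.
  have kjE : k = j.
    by apply: (@bar_fst_inj _ (symd S [set j.1])); rewrite ?kT ?in_bar_symd1 ?jS ?eqxx.
  by move: Ep'; rewrite kjE /exch symd1K EpS Exj => -[<-] /=; rewrite addrC subrK.
have kS : k \notin bar S by move: kT; rewrite in_bar_symd1 (negbTE kj) addbF => ->.
have jk : j.1 != k.1 by rewrite eq_sym.
have pS' : p (exch S j k) != None by rewrite Ep'.
have [kA|kA] := boolP (k \in supp x); last first.
  by have := minO _ pS'; rewrite leqNgt overlap_exch_lt.
move: (kA); rewrite in_supp; case Exk: (x k) => [xk|] // _ /=.
have := minE _ pS' (overlap_exch jS jA kS jk kA).
by rewrite -subr_ge0 excess_exch // Ep' EpS Exj Exk /=; lra.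
Qed.

Lemma cocycle_cocircuit_cover :
  (forall v, is_circuit p v -> torth x v) -> (exists S, p S != None) ->
  forall j, x j != None ->
  exists y, [/\ is_cocircuit p y, y j = x j & forall k, tle (x k) (y k)].
Proof.
move=> orthx pfin j xj.
have [S0 opt0] := exists_optimal pfin.
have [S [optS jS]] := optimal_mem_bar orthx xj opt0.
have [pS _ _] := optS; case EpS: (p S) pS => [ps|] // _.
case Exj: (x j) xj => [xjv|] // _.
pose T := symd S [set j.1].
pose y := shift (cocirc p T) (xjv - ps).
have yj : y j = Some xjv.
  by rewrite /y /shift cocircE in_bar_symd1 jS eqxx symd1K EpS /= addrC subrK.
exists y; split => //; last exact: optimal_cocirc_ge.
by exists T, (xjv - ps); split => //; apply/set0Pn; exists j; rewrite inE yj.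
Qed.

End Optimal.

Lemma tconv_of_cover (R : realType) n (P : ('I_n * bool -> option R) -> Prop)
    (x : 'I_n * bool -> option R) :
  (forall j, x j != None -> exists y, [/\ P y, y j = x j & forall k, tle (x k) (y k)]) ->
  tconv P x.
Proof.
move=> cover; pose A := supp x.
have /fin_all_exists [a cover_a] : forall i : 'I_#|A|,
    exists y, [/\ P y, y (enum_val i) = x (enum_val i) & forall k, tle (x k) (y k)].
  by move=> i; apply: cover; rewrite -in_supp; apply: enum_valP.
exists #|A|, a, (fun=> Some 0); split => [i|j]; first by case: (cover_a i).
apply: tle_anti.
  apply: big_tmin_ge => i; case: (cover_a i) => _ _ /(_ j).
  by case: (x j) => [v|]; case: (a i j) => //= w; rewrite add0r.
have [jA|jA] := boolP (j \in A); last first.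
  by move: jA; rewrite in_supp negbK => /eqP ->; apply: tle_None.
apply: tle_trans (big_tmin_le _ (mem_index_enum (enum_rank_in jA j))) _.
have [_ + _] := cover_a (enum_rank_in jA j); rewrite enum_rankK_in // => ->.
by case: (x j) => //= v; rewrite add0r lexx.
Qed.

Theorem theorem6p9 (R : realType) (n : nat) (p : {set 'I_n} -> option R) :
  wick p -> (exists S, p S != None) ->
  forall x : 'I_n * bool -> option R,
    cocycle p x <-> (admissible x /\ tconv (is_cocircuit p) x).
Proof.
move=> wickp pfin x; split.
  case=> admx orthx; split => //; apply: tconv_of_cover.
  exact: cocycle_cocircuit_cover.
case=> admx hull; split => // v [T [mu [Ev _]]].
apply: torth_tconv hull => y [U [lam [Ey _]]].
exact: eq_torth Ey Ev (torth_cocirc_circ _ _ _ _ wickp).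
Qed.
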